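(* Let $\alpha>0$, $\beta>0$, $M\in\mathbb{R}$, let $(a,b)$ be a bounded interval, and let $v$ be a local minimizer of $\mathcal{G}(\alpha,\beta,Mx,(a,b),\cdot)$. If $M\ne0$, set $L_0:=2\bigl(\frac{\alpha}{\beta M^2}\bigr)^{1/3}$. Then: (1) If $M\ne0$ and $b-a>L_0$, then in $(a,b)$ there is either a jump point $x\in S_v$ or a point $y\in(a,b)\setminus S_v$ with $v(y)=My$. (2) If $x\in S_v$, then $v(x^+)-Mx=Mx-v(x^-)$, and if $M\ne0$ this value has the same sign as $M$. (3) If $x_1<x_2$ are consecutive jump points of $v$ (no other jump points in $(x_1,x_2)$), then $v(x)=M(x_1+x_2)/2$ for every $x\in(x_1,x_2)$. (4) If $M\ne0$ and $y_1<y_2<\dots<y_m$ are the points of $(a,b)$ where $v$ intersects the line $Mx$, then $y_2-y_1=y_3-y_2=\dots=y_m-y_{m-1}$.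
   Context: $S((a,b))$ is the space of step functions with finitely many jumps on $(a,b)$ (BV functions with zero diffuse derivative and finite jump set $S_u$); $u(x^\pm)$ are one-sided values, and $u(a),u(b)$ denote values near the endpoints. $\mathcal{G}(\alpha,\beta,f,(a,b),u)=\alpha\,\#(S_u\cap(a,b))+\beta\int_a^b(u-f)^2dx$, here with $f(x)=Mx$. A local minimizer is $v\in S((a,b))$ with $\mathcal{G}(\alpha,\beta,f,(a,b),v)\le\mathcal{G}(\alpha,\beta,f,(a,b),u)$ for every $u\in S((a,b))$ with $u(a)=v(a)$, $u(b)=v(b)$. An intersection point of $v$ with the line $Mx$ is a point $y\in(a,b)\setminus S_v$ with $v(y)=My$. *)

From Stdlib Require Import Reals Lra List Sorted.
From Coquelicot Require Import Coquelicot.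
Open Scope R_scope.

(* A step function on (a,b) with finitely many jumps is represented by
   - its jump list  s = [s_1; ...; s_k]  with a < s_1 < ... < s_k < b,
   - its value list c = [c_0; ...; c_k]  (value c_i on (s_i, s_{i+1}),
     with s_0 = a, s_{k+1} = b),
   consecutive values distinct, so that the jump set S_u is exactly s. *)
Definition is_step (a b : R) (s c : list R) : Prop :=
  length c = S (length s) /\
  Sorted Rlt (a :: s ++ b :: nil) /\
  (forall i, (i < length s)%nat -> nth i c 0 <> nth (S i) c 0).

Definition nle (s : list R) (x : R) : nat :=
  length (filter (fun t => if Rle_dec t x then true else false) s).
Definition nlt (s : list R) (x : R) : nat :=
  length (filter (fun t => if Rlt_dec t x then true else false) s).

(* pointwise representative (right-continuous at jumps; the values at the
   finitely many jump points are irrelevant for the integral) *)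
Definition sval (s c : list R) (x : R) : R := nth (nle s x) c 0.
Definition sval_r (s c : list R) (x : R) : R := nth (nle s x) c 0.
Definition sval_l (s c : list R) (x : R) : R := nth (nlt s x) c 0.
Definition sval_a (c : list R) : R := nth 0 c 0.
Definition sval_b (s c : list R) : R := nth (length s) c 0.

Definition Gfun (alpha beta : R) (f : R -> R) (a b : R) (s c : list R) : R :=
  alpha * INR (length s) + beta * RInt (fun x => (sval s c x - f x) ^ 2) a b.

Definition local_min (alpha beta : R) (f : R -> R) (a b : R) (s c : list R) : Prop :=
  is_step a b s c /\
  forall s' c', is_step a b s' c' ->
    sval_a c' = sval_a c -> sval_b s' c' = sval_b s c ->
    Gfun alpha beta f a b s c <= Gfun alpha beta f a b s' c'.

Definition inter_pt (M a b : R) (s c : list R) (y : R) : Prop :=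
  a < y < b /\ ~ In y s /\ sval s c y = M * y.

(* A local minimizer is stationary under the two perturbations that keep the
   number of jumps and the boundary values: moving one jump point, and changing
   the value on one interior segment.  The cost of a step function with nodes
   a = x_0 < ... < x_(n+1) = b and values c_0, ..., c_n is an explicit
   polynomial in these data.  Moving the jump x_(j+1) by d changes
   \int (v - Mx)^2 by (c_j - c_(j+1)) d (c_j + c_(j+1) - 2 M x_(j+1) - M d);
   being nonnegative for all small d, this forces c_j + c_(j+1) = 2 M x_(j+1)
   and a jump in the direction of M.  Changing the value on an interior segment
   changes the integral by the segment length times the change of the squared
   distance to the mean M (x_i + x_(i+1)) / 2 of the line there, so the value
   is that mean.  Together these make c_k / M an arithmetic progression whose
   k-th term is the only possible crossing on the k-th segment, and all interior
   segments do contain it.  Finally, a constant c_0 that misses the line on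
   (a, b) is at distance at least |M| (b - a) / 2 from M (a + b) / 2; replacing
   it by M (a + b) / 2 on (a + e, b - e) costs 2 alpha and gains about
   beta M^2 (b - a)^3 / 4, which is more once b - a > L_0. *)

From Stdlib Require Import Reals Lra Lia List Sorted.
From Coquelicot Require Import Coquelicot.
Open Scope R_scope.

Lemma sum_f_R0_single (h : nat -> R) N j : (j <= N)%nat ->
  (forall i, (i <= N)%nat -> i <> j -> h i = 0) -> sum_f_R0 h N = h j.
Proof.
  induction N as [|N IH]; simpl; intros Hj Hh.
  - replace j with 0%nat by lia. reflexivity.
  - destruct (Nat.eq_dec j (S N)) as [->|].
    + rewrite sum_eq_R0; [ring|]. intros i Hi. apply Hh; lia.
    + rewrite IH, (Hh (S N)); [ring | lia | lia | lia |].
      intros i Hi Hij. apply Hh; lia.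
Qed.

Lemma sum_f_R0_pair (h : nat -> R) N j : (S j <= N)%nat ->
  (forall i, (i <= N)%nat -> i <> j -> i <> S j -> h i = 0) ->
  sum_f_R0 h N = h j + h (S j).
Proof.
  induction N as [|N IH]; simpl; intros Hj Hh; [lia|].
  destruct (Nat.eq_dec j N) as [->|].
  - rewrite (sum_f_R0_single h N N); [ring | lia |]. intros i Hi Hij. apply Hh; lia.
  - rewrite IH, (Hh (S N)); [ring | lia | lia | lia | lia |].
    intros i Hi Hij Hij'. apply Hh; lia.
Qed.

Fixpoint set_nth (l : list R) (j : nat) (x : R) : list R :=
  match l, j with
  | nil, _ => nil
  | _ :: t, O => x :: t
  | y :: t, S j => y :: set_nth t j x
  end.

Lemma length_set_nth l j x : length (set_nth l j x) = length l.
Proof. revert j; induction l as [|y l IH]; intros [|j]; simpl; auto. Qed.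

Lemma nth_set_nth l j x i : (j < length l)%nat ->
  nth i (set_nth l j x) 0 = if Nat.eq_dec i j then x else nth i l 0.
Proof.
  revert i j; induction l as [|y l IH]; intros [|i] [|j] Hj; simpl in *; try lia; auto.
  rewrite IH by lia. repeat destruct Nat.eq_dec; auto; lia.
Qed.

Lemma set_nth_app l m j x : (j < length l)%nat ->
  set_nth (l ++ m) j x = set_nth l j x ++ m.
Proof.
  revert j; induction l as [|y l IH]; intros [|j] Hj; simpl in *; try lia; auto.
  rewrite IH by lia. reflexivity.
Qed.

Lemma Sorted_nth_lt (l : list R) : Sorted Rlt l ->
  forall i j, (i < j)%nat -> (j < length l)%nat -> nth i l 0 < nth j l 0.
Proof.
  intros Hl. apply Sorted_StronglySorted in Hl; [|intros x y z; lra].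
  induction Hl as [|x l _ IH Hx]; simpl; intros i j Hij Hj; [lia|].
  destruct j as [|j]; [lia|]. destruct i as [|i].
  - rewrite Forall_forall in Hx. apply Hx, nth_In. lia.
  - apply IH; lia.
Qed.

Lemma Sorted_nth_le (l : list R) : Sorted Rlt l ->
  forall i j, (i <= j)%nat -> (j < length l)%nat -> nth i l 0 <= nth j l 0.
Proof.
  intros Hl i j Hij Hj. destruct (Nat.eq_dec i j) as [->|]; [lra|].
  left; apply Sorted_nth_lt; auto; lia.
Qed.

Lemma Sorted_of_nth_lt (l : list R) :
  (forall i, (S i < length l)%nat -> nth i l 0 < nth (S i) l 0) -> Sorted Rlt l.
Proof.
  induction l as [|x l IH]; intros H; constructor.
  - apply IH. intros i Hi. apply (H (S i)). simpl; lia.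
  - destruct l as [|y l]; constructor. apply (H 0%nat). simpl; lia.
Qed.

Lemma lt_of_succ_lt (f : nat -> R) n : (forall k, (k < n)%nat -> f k < f (S k)) ->
  forall k k', (k < k')%nat -> (k' <= n)%nat -> f k < f k'.
Proof.
  intros Hsucc k k' Hkk'. induction Hkk' as [|k' Hkk' IH]; intros Hk'.
  - apply Hsucc. lia.
  - apply (Rlt_trans _ (f k')); [apply IH | apply Hsucc]; lia.
Qed.

Lemma Sorted_enum_consecutive (f : nat -> R) n (ys : list R) : Sorted Rlt ys ->
  (forall k, (k < n)%nat -> f k < f (S k)) ->
  (forall y, In y ys -> exists k, (k <= n)%nat /\ y = f k) ->
  (forall k, (1 <= k)%nat -> (k < n)%nat -> In (f k) ys) ->
  forall l, (S l < length ys)%nat ->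
  exists k, (k < n)%nat /\ nth l ys 0 = f k /\ nth (S l) ys 0 = f (S k).
Proof.
  intros Hys Hsucc Hrange Hinterior l Hl.
  pose proof (lt_of_succ_lt f n Hsucc) as Hmono.
  assert (Hlt : nth l ys 0 < nth (S l) ys 0) by (apply Sorted_nth_lt; auto).
  destruct (Hrange (nth l ys 0)) as (k1 & Hk1 & E1); [apply nth_In; lia|].
  destruct (Hrange (nth (S l) ys 0)) as (k2 & Hk2 & E2); [apply nth_In; lia|].
  assert (Hk12 : (k1 < k2)%nat).
  { destruct (Nat.lt_ge_cases k1 k2); auto. exfalso.
    destruct (Nat.eq_dec k1 k2) as [->|]; [lra|].
    pose proof (Hmono k2 k1 ltac:(lia) Hk1). lra. }
  exists k1. repeat split; [lia | auto |].
  destruct (Nat.eq_dec k2 (S k1)) as [->|]; [auto | exfalso].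
  destruct (In_nth ys (f (S k1)) 0 (Hinterior (S k1) ltac:(lia) ltac:(lia))) as (l' & Hl' & E3).
  pose proof (Hmono k1 (S k1) ltac:(lia) ltac:(lia)).
  pose proof (Hmono (S k1) k2 ltac:(lia) Hk2).
  destruct (Nat.le_gt_cases l' l).
  - assert (nth l' ys 0 <= nth l ys 0) by (apply Sorted_nth_le; auto; lia). lra.
  - assert (nth (S l) ys 0 <= nth l' ys 0) by (apply Sorted_nth_le; auto; lia). lra.
Qed.

Lemma length_filter_prefix (P : R -> bool) (s : list R) i : (i <= length s)%nat ->
  (forall k, (k < i)%nat -> P (nth k s 0) = true) ->
  (forall k, (i <= k)%nat -> (k < length s)%nat -> P (nth k s 0) = false) ->
  length (filter P s) = i.
Proof.
  revert i; induction s as [|x s IH]; simpl; intros i Hi Htrue Hfalse; [lia|].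
  destruct i as [|i].
  - rewrite (Hfalse 0%nat) by lia. apply IH; [lia | intros; lia |].
    intros k Hk1 Hk2. apply (Hfalse (S k)); lia.
  - rewrite (Htrue 0%nat) by lia. simpl. f_equal. apply IH; [lia | |].
    + intros k Hk. apply (Htrue (S k)); lia.
    + intros k Hk1 Hk2. apply (Hfalse (S k)); lia.
Qed.

Definition node (a b : R) (s : list R) (i : nat) : R := nth i (a :: s ++ b :: nil) 0.

Lemma length_nodes a b (s : list R) : length (a :: s ++ b :: nil) = S (S (length s)).
Proof. simpl. rewrite length_app. simpl. lia. Qed.

Lemma node_0 a b s : node a b s 0 = a.
Proof. reflexivity. Qed.

Lemma node_S a b s j : (j < length s)%nat -> node a b s (S j) = nth j s 0.
Proof. intros Hj. unfold node. simpl. rewrite app_nth1; auto. Qed.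

Lemma node_last a b s : node a b s (S (length s)) = b.
Proof. unfold node. simpl. rewrite app_nth2, Nat.sub_diag by lia. reflexivity. Qed.

Lemma node_set_nth a b s j t i : (j < length s)%nat ->
  node a b (set_nth s j t) i = if Nat.eq_dec i (S j) then t else node a b s i.
Proof.
  intros Hj. unfold node.
  replace (a :: set_nth s j t ++ b :: nil) with (set_nth (a :: s ++ b :: nil) (S j) t)
    by (simpl; rewrite set_nth_app; auto).
  apply nth_set_nth. rewrite length_nodes. lia.
Qed.

Lemma In_node a b s x : In x s -> exists j, (j < length s)%nat /\ node a b s (S j) = x.
Proof.
  intros Hx. destruct (In_nth s x 0 Hx) as (j & Hj & <-).
  exists j. split; [auto | apply node_S; auto].
Qed.

Lemma is_step_nodes a b s c : is_step a b s c <->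
  length c = S (length s) /\
  (forall i, (i <= length s)%nat -> node a b s i < node a b s (S i)) /\
  (forall i, (i < length s)%nat -> nth i c 0 <> nth (S i) c 0).
Proof.
  unfold is_step. split; intros (Hc & Hs & Hd); repeat split; auto.
  - intros i Hi. apply Sorted_nth_lt; auto. rewrite length_nodes. lia.
  - apply Sorted_of_nth_lt. rewrite length_nodes. intros i Hi. apply Hs. lia.
Qed.

Lemma between_nodes_of_notin a b s y : a < y < b -> ~ In y s ->
  exists i, (i <= length s)%nat /\ node a b s i < y < node a b s (S i).
Proof.
  intros Hy Hnotin.
  assert (Hbelow : forall k, (k <= S (length s))%nat -> y < node a b s k ->
            exists i, (i < k)%nat /\ node a b s i < y < node a b s (S i)).
  { induction k as [|k IH]; intros Hk Hyk.
    - rewrite node_0 in Hyk. lra.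
    - destruct (Rlt_le_dec y (node a b s k)) as [Hl|[Hl|He]].
      + destruct (IH ltac:(lia) Hl) as (i & Hi & Hyi). exists i. split; [lia | auto].
      + exists k. split; [lia | auto].
      + destruct k as [|k]; [rewrite node_0 in He; lra|].
        exfalso. apply Hnotin. rewrite <- He, node_S by lia. apply nth_In. lia. }
  destruct (Hbelow (S (length s))) as (i & Hi & Hyi); [lia | rewrite node_last; lra |].
  exists i. split; [lia | auto].
Qed.

Section Nodes.
Variables (a b : R) (s : list R).
Hypothesis Hsorted : Sorted Rlt (a :: s ++ b :: nil).

Lemma node_lt i j : (i < j)%nat -> (j <= S (length s))%nat -> node a b s i < node a b s j.
Proof. intros Hij Hj. apply Sorted_nth_lt; auto. rewrite length_nodes. lia. Qed.

Lemma node_le i j : (i <= j)%nat -> (j <= S (length s))%nat -> node a b s i <= node a b s j.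
Proof. intros Hij Hj. apply Sorted_nth_le; auto. rewrite length_nodes. lia. Qed.

Lemma nle_between i y : (i <= length s)%nat ->
  node a b s i < y < node a b s (S i) -> nle s y = i.
Proof.
  intros Hi Hy. unfold nle. apply length_filter_prefix; auto.
  - intros k Hk. rewrite <- (node_S a b) by lia. destruct Rle_dec as [|Hn]; auto.
    exfalso; apply Hn. assert (node a b s (S k) <= node a b s i) by (apply node_le; lia). lra.
  - intros k Hk1 Hk2. rewrite <- (node_S a b) by lia. destruct Rle_dec; auto.
    assert (node a b s (S i) <= node a b s (S k)) by (apply node_le; lia). lra.
Qed.

Lemma nle_node j : (j < length s)%nat -> nle s (node a b s (S j)) = S j.
Proof.
  intros Hj. unfold nle. apply length_filter_prefix; [lia | |].
  - intros k Hk. rewrite <- (node_S a b) by lia. destruct Rle_dec as [|Hn]; auto.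
    exfalso; apply Hn. apply node_le; lia.
  - intros k Hk1 Hk2. rewrite <- (node_S a b) by lia. destruct Rle_dec; auto.
    assert (node a b s (S j) < node a b s (S k)) by (apply node_lt; lia). lra.
Qed.

Lemma nlt_node j : (j < length s)%nat -> nlt s (node a b s (S j)) = j.
Proof.
  intros Hj. unfold nlt. apply length_filter_prefix; [lia | |].
  - intros k Hk. rewrite <- (node_S a b) by lia. destruct Rlt_dec as [|Hn]; auto.
    exfalso; apply Hn. apply node_lt; lia.
  - intros k Hk1 Hk2. rewrite <- (node_S a b) by lia. destruct Rlt_dec; auto.
    assert (node a b s (S j) <= node a b s (S k)) by (apply node_le; lia). lra.
Qed.

Lemma notin_between_nodes i y : (i <= length s)%nat ->
  node a b s i < y < node a b s (S i) -> ~ In y s.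
Proof.
  intros Hi Hy Hin. destruct (In_node a b s y Hin) as (j & Hj & <-).
  destruct (Nat.le_gt_cases (S j) i).
  - assert (node a b s (S j) <= node a b s i) by (apply node_le; lia). lra.
  - assert (node a b s (S i) <= node a b s (S j)) by (apply node_le; lia). lra.
Qed.

End Nodes.

Definition piece_cost (M d u v : R) : R :=
  (v - u) * ((d - M * (u + v) / 2) ^ 2 + M ^ 2 * (v - u) ^ 2 / 12).

Lemma is_RInt_piece_cost M d u v :
  is_RInt (fun x => (d - M * x) ^ 2) u v (piece_cost M d u v).
Proof.
  set (F := fun y => d ^ 2 * y - d * M * y ^ 2 + M ^ 2 * y ^ 3 / 3).
  replace (piece_cost M d u v) with (F v - F u) by (unfold F, piece_cost; field).
  apply (is_RInt_derive F).
  - intros x _. unfold F. auto_derive; [auto | field].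
  - intros x _. apply (ex_derive_continuous (K := R_AbsRing) (V := R_NormedModule)).
    auto_derive. auto.
Qed.

Definition step_cost (M a b : R) (s c : list R) : R :=
  sum_f_R0 (fun i => piece_cost M (nth i c 0) (node a b s i) (node a b s (S i))) (length s).

Lemma sval_between a b s c i y : Sorted Rlt (a :: s ++ b :: nil) -> (i <= length s)%nat ->
  node a b s i < y < node a b s (S i) -> sval s c y = nth i c 0.
Proof. intros Hs Hi Hy. unfold sval. rewrite (nle_between a b s Hs i y); auto. Qed.

Lemma RInt_step a b s c M : is_step a b s c ->
  RInt (fun x => (sval s c x - M * x) ^ 2) a b = step_cost M a b s c.
Proof.
  intros Hstep. pose proof Hstep as (_ & Hs & _). apply is_step_nodes in Hstep as (_ & Hinc & _).
  set (f := fun x => (sval s c x - M * x) ^ 2).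
  assert (Hpiece : forall i, (i <= length s)%nat ->
    is_RInt f (node a b s i) (node a b s (S i))
      (piece_cost M (nth i c 0) (node a b s i) (node a b s (S i)))).
  { intros i Hi.
    apply (is_RInt_ext (fun x => (nth i c 0 - M * x) ^ 2)); [|apply is_RInt_piece_cost].
    intros x Hx. rewrite Rmin_left, Rmax_right in Hx by (left; apply Hinc; auto).
    unfold f. rewrite (sval_between a b s c i x); auto. }
  assert (Hpartial : forall k, (k <= length s)%nat ->
    is_RInt f a (node a b s (S k))
      (sum_f_R0 (fun i => piece_cost M (nth i c 0) (node a b s i) (node a b s (S i))) k)).
  { induction k as [|k IH]; intros Hk.
    - exact (Hpiece 0%nat (Nat.le_0_l _)).
    - apply (is_RInt_Chasles f a (node a b s (S k))); [apply IH | apply Hpiece]; lia. }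
  apply is_RInt_unique. pose proof (Hpartial (length s) (le_n _)) as Hall.
  rewrite node_last in Hall. exact Hall.
Qed.

Lemma Gfun_step alpha beta M a b s c : is_step a b s c ->
  Gfun alpha beta (fun x => M * x) a b s c =
  alpha * INR (length s) + beta * step_cost M a b s c.
Proof. intros Hstep. unfold Gfun. rewrite RInt_step; auto. Qed.

Lemma step_cost_move_node M a b s c j t : (j < length s)%nat ->
  step_cost M a b (set_nth s j t) c - step_cost M a b s c =
  (nth j c 0 - nth (S j) c 0) * (t - node a b s (S j)) *
  (nth j c 0 + nth (S j) c 0 - 2 * M * node a b s (S j) - M * (t - node a b s (S j))).
Proof.
  intros Hj. unfold step_cost. rewrite length_set_nth, <- minus_sum.
  rewrite (sum_f_R0_pair _ _ j); [| lia |].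
  - rewrite !node_set_nth by auto. repeat destruct Nat.eq_dec; try lia.
    unfold piece_cost. field.
  - intros i Hi Hij Hij'. rewrite !node_set_nth by auto. repeat destruct Nat.eq_dec; try lia. ring.
Qed.

Lemma step_cost_change_value M a b s c i d : (S i < length s)%nat -> (S i < length c)%nat ->
  step_cost M a b s (set_nth c (S i) d) - step_cost M a b s c =
  (node a b s (S (S i)) - node a b s (S i)) *
  ((d - M * (node a b s (S i) + node a b s (S (S i))) / 2) ^ 2 -
   (nth (S i) c 0 - M * (node a b s (S i) + node a b s (S (S i))) / 2) ^ 2).
Proof.
  intros Hi Hc. unfold step_cost. rewrite <- minus_sum.
  rewrite (sum_f_R0_pair _ _ (S i)); [| lia |].
  - rewrite !nth_set_nth by auto. repeat destruct Nat.eq_dec; try lia.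
    unfold piece_cost. field.
  - intros k Hk Hki Hki'. rewrite !nth_set_nth by auto. destruct Nat.eq_dec; [lia | ring].
Qed.

Lemma quadratic_nonneg_near_0 A B r : 0 < r ->
  (forall d, -r < d < r -> 0 <= d * (A - B * d)) -> A = 0 /\ B <= 0.
Proof.
  intros Hr Hnonneg.
  assert (Hbound : forall t, 0 < t < r -> Rabs A <= - B * t).
  { intros t Ht. pose proof (Hnonneg t ltac:(lra)). pose proof (Hnonneg (- t) ltac:(lra)).
    apply Rabs_le. split; nra. }
  assert (HB : B <= 0).
  { pose proof (Hbound (r / 2) ltac:(lra)). pose proof (Rabs_pos A). nra. }
  split; [|exact HB].
  destruct (Req_dec A 0) as [|HA]; [assumption | exfalso].
  pose proof (Rabs_pos_lt A HA) as HApos.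
  set (D := Rabs A - B * r).
  assert (HD : 0 < D) by (unfold D; nra).
  (* small enough that [- B t <= |A| / 2] *)
  set (t := r * Rabs A / (2 * D)).
  assert (Ht : t * (2 * D) = r * Rabs A) by (unfold t; field; lra).
  assert (Htpos : 0 < t < r).
  { split.
    - apply (Rmult_lt_reg_r (2 * D)); nra.
    - apply (Rmult_lt_reg_r (2 * D)); unfold D in *; nra. }
  pose proof (Hbound t Htpos). unfold D in *. nra.
Qed.

Lemma eq_of_sq_dev_le_avoiding x m p q :
  (forall d, d <> p -> d <> q -> (x - m) ^ 2 <= (d - m) ^ 2) -> x = m.
Proof.
  intros Hmin. destruct (Req_dec x m) as [|Hxm]; [assumption | exfalso].
  pose proof (Rsqr_pos_lt (x - m) (Rminus_eq_contra _ _ Hxm)) as Hpos. unfold Rsqr in Hpos.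
  assert (Hshrink : forall k, 0 <= k < 1 ->
            m + k * (x - m) <> p -> m + k * (x - m) <> q -> False).
  { intros k Hk Hp Hq. pose proof (Hmin _ Hp Hq) as Hle.
    replace ((m + k * (x - m) - m) ^ 2) with (k ^ 2 * (x - m) ^ 2) in Hle by ring.
    assert (k ^ 2 < 1) by nra. nra. }
  (* Among the points [m + k (x - m)], [k = 0, 1/2, 3/4], all strictly closer to [m]
     than [x], one avoids both [p] and [q]. *)
  assert (Hat0 : m = p \/ m = q).
  { destruct (Req_dec m p), (Req_dec m q); auto.
    exfalso. apply (Hshrink 0); [lra | |]; rewrite Rmult_0_l, Rplus_0_r; auto. }
  assert (Hat_half : m + 1/2 * (x - m) = p \/ m + 1/2 * (x - m) = q).
  { destruct (Req_dec (m + 1/2 * (x - m)) p), (Req_dec (m + 1/2 * (x - m)) q); auto.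
    exfalso. apply (Hshrink (1/2)); auto; lra. }
  apply (Hshrink (3/4)); [lra | |]; intro; apply Hxm; destruct Hat0, Hat_half; lra.
Qed.

Section LocalMinimizer.
Variables (alpha beta M a b : R) (s c : list R).
Hypothesis Hbeta : 0 < beta.
Hypothesis Hmin : local_min alpha beta (fun x => M * x) a b s c.

Lemma local_min_step_cost_le s' c' : is_step a b s' c' -> length s' = length s ->
  sval_a c' = sval_a c -> sval_b s' c' = sval_b s c ->
  step_cost M a b s c <= step_cost M a b s' c'.
Proof.
  intros Hstep' Hlen Ha Hb. destruct Hmin as [Hstep Hle].
  pose proof (Hle s' c' Hstep' Ha Hb) as HG.
  rewrite !Gfun_step, Hlen in HG by auto.
  apply (Rmult_le_reg_l beta); lra.
Qed.

Lemma jump_stationary j : (j < length s)%nat ->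
  nth j c 0 + nth (S j) c 0 = 2 * M * node a b s (S j) /\
  0 <= (nth (S j) c 0 - nth j c 0) * M.
Proof.
  intros Hj. pose proof (proj1 Hmin) as Hstep.
  apply is_step_nodes in Hstep as (Hc & Hinc & Hdist).
  set (x := node a b s (S j)).
  set (r := Rmin (x - node a b s j) (node a b s (S (S j)) - x)).
  assert (Hleft : node a b s j < x) by (apply Hinc; lia).
  assert (Hright : x < node a b s (S (S j))) by (apply Hinc; lia).
  assert (Hr : 0 < r) by (apply Rmin_glb_lt; lra).
  assert (Hr1 : r <= x - node a b s j) by apply Rmin_l.
  assert (Hr2 : r <= node a b s (S (S j)) - x) by apply Rmin_r.
  destruct (quadratic_nonneg_near_0
              ((nth j c 0 - nth (S j) c 0) * (nth j c 0 + nth (S j) c 0 - 2 * M * x))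
              ((nth j c 0 - nth (S j) c 0) * M) r Hr) as [Hbalance Hsign].
  - intros d Hd.
    assert (Hstep' : is_step a b (set_nth s j (x + d)) c).
    { apply is_step_nodes. rewrite length_set_nth. repeat split; auto.
      intros i Hi. rewrite !node_set_nth by auto.
      destruct (Nat.eq_dec (S i) (S j)) as [Hij|]; destruct (Nat.eq_dec i (S j)); try lia.
      + injection Hij as ->. lra.
      + subst i. lra.
      + apply Hinc; lia. }
    pose proof (local_min_step_cost_le _ _ Hstep' (length_set_nth s j (x + d))) as Hle.
    unfold sval_b in Hle. rewrite length_set_nth in Hle.
    pose proof (step_cost_move_node M a b s c j (x + d) Hj) as Hdiff. fold x in Hdiff.
    replace (x + d - x) with d in Hdiff by ring.
    specialize (Hle eq_refl eq_refl). nra.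
  - apply Rmult_integral in Hbalance as [Heq|]; [|split; [lra | nra]].
    exfalso. apply (Hdist j Hj). lra.
Qed.

Lemma jump_balance j : (j < length s)%nat ->
  nth j c 0 + nth (S j) c 0 = 2 * M * node a b s (S j).
Proof. intros Hj. apply (jump_stationary j Hj). Qed.

Lemma jump_sign j : (j < length s)%nat -> M <> 0 ->
  0 < (nth (S j) c 0 - nth j c 0) * M.
Proof.
  intros Hj HM. destruct (jump_stationary j Hj) as [_ Hsign].
  pose proof (proj1 Hmin) as Hstep. apply is_step_nodes in Hstep as (_ & _ & Hdist).
  destruct Hsign as [|Hzero]; [assumption | exfalso].
  symmetry in Hzero. apply Rmult_integral in Hzero as [Hzero|]; [|contradiction].
  apply (Hdist j Hj). lra.
Qed.

Lemma segment_value i : (S i < length s)%nat ->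
  nth (S i) c 0 = M * (node a b s (S i) + node a b s (S (S i))) / 2.
Proof.
  intros Hi. pose proof (proj1 Hmin) as Hstep.
  apply is_step_nodes in Hstep as (Hc & Hinc & Hdist).
  (* the new value must differ from both neighbours to keep the jump set *)
  apply (eq_of_sq_dev_le_avoiding _ _ (nth i c 0) (nth (S (S i)) c 0)).
  intros d Hdl Hdr.
  assert (Hstep' : is_step a b s (set_nth c (S i) d)).
  { apply is_step_nodes. rewrite length_set_nth. repeat split; auto.
    intros k Hk. rewrite !nth_set_nth by lia.
    destruct (Nat.eq_dec (S k) (S i)) as [Hki|]; destruct (Nat.eq_dec k (S i)); try lia.
    - injection Hki as ->. auto.
    - subst k. auto.
    - apply Hdist; lia. }
  pose proof (local_min_step_cost_le _ _ Hstep' eq_refl) as Hle.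
  unfold sval_a, sval_b in Hle. rewrite !nth_set_nth in Hle by lia.
  do 2 (destruct Nat.eq_dec; [lia|]).
  specialize (Hle eq_refl eq_refl).
  pose proof (step_cost_change_value M a b s c i d Hi ltac:(lia)) as Hdiff.
  assert (Hlen : node a b s (S i) < node a b s (S (S i))) by (apply Hinc; lia).
  nra.
Qed.

Lemma jump_symmetric x : In x s ->
  sval_r s c x - M * x = M * x - sval_l s c x /\
  (0 < M -> 0 < sval_r s c x - M * x) /\
  (M < 0 -> sval_r s c x - M * x < 0).
Proof.
  intros Hx. destruct (In_node a b s x Hx) as (j & Hj & <-).
  pose proof (proj1 Hmin) as (_ & Hsorted & _).
  unfold sval_r, sval_l. rewrite nle_node, nlt_node by auto.
  pose proof (jump_balance j Hj) as Hbalance.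
  split; [lra | split; intros HM; pose proof (jump_sign j Hj ltac:(lra)); nra].
Qed.

Lemma value_between_consecutive_jumps x1 x2 : In x1 s -> In x2 s -> x1 < x2 ->
  (forall z, In z s -> ~ (x1 < z < x2)) ->
  forall x, x1 < x < x2 -> sval s c x = M * (x1 + x2) / 2.
Proof.
  intros Hx1 Hx2 Hlt Hnone x Hx.
  destruct (In_node a b s x1 Hx1) as (j1 & Hj1 & <-).
  destruct (In_node a b s x2 Hx2) as (j2 & Hj2 & <-).
  pose proof (proj1 Hmin) as (_ & Hsorted & _).
  assert (Hj12 : j2 = S j1).
  { destruct (Nat.lt_total j2 (S j1)) as [|[|]]; auto; exfalso.
    - assert (node a b s (S j2) <= node a b s (S j1)) by (apply node_le; auto; lia). lra.
    - apply (Hnone (node a b s (S (S j1)))).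
      + rewrite node_S by lia. apply nth_In. lia.
      + split; apply node_lt; auto; lia. }
  subst j2. rewrite (sval_between a b s c (S j1)) by (assumption || lia).
  apply segment_value; auto.
Qed.

Lemma segment_values_arithmetic k : (k < length s)%nat ->
  nth (S k) c 0 - nth k c 0 = nth 1 c 0 - nth 0 c 0.
Proof.
  induction k as [|k IH]; intros Hk; [reflexivity|].
  rewrite <- IH by lia.
  pose proof (jump_balance k ltac:(lia)). pose proof (jump_balance (S k) Hk).
  pose proof (segment_value k Hk). lra.
Qed.

Lemma crossing_on_segment y : M <> 0 -> inter_pt M a b s c y ->
  exists k, (k <= length s)%nat /\ y = nth k c 0 / M.
Proof.
  intros HM (Hy & Hnotin & Hval). pose proof (proj1 Hmin) as (_ & Hsorted & _).
  destruct (between_nodes_of_notin a b s y Hy Hnotin) as (k & Hk & Hyk).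
  exists k. split; auto.
  rewrite <- (sval_between a b s c k y), Hval by auto. field. auto.
Qed.

Lemma interior_segment_crossing k : M <> 0 -> (1 <= k)%nat -> (k < length s)%nat ->
  inter_pt M a b s c (nth k c 0 / M).
Proof.
  intros HM Hk1 Hk2. pose proof (proj1 Hmin) as (_ & Hsorted & _).
  destruct k as [|i]; [lia|].
  assert (Hmid : nth (S i) c 0 / M = (node a b s (S i) + node a b s (S (S i))) / 2).
  { rewrite segment_value by auto. field. auto. }
  assert (Hbetween : node a b s (S i) < nth (S i) c 0 / M < node a b s (S (S i))).
  { rewrite Hmid. assert (node a b s (S i) < node a b s (S (S i))) by (apply node_lt; auto; lia).
    lra. }
  repeat split.
  - assert (a <= node a b s (S i)) by (rewrite <- (node_0 a b s); apply node_le; auto; lia). lra.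
  - assert (node a b s (S (S i)) <= b)
      by (rewrite <- (node_last a b s) at 2; apply node_le; auto; lia).
    lra.
  - apply (notin_between_nodes a b s Hsorted (S i)); [lia | auto].
  - rewrite (sval_between a b s c (S i)) by (assumption || lia). field. auto.
Qed.

Lemma crossings_equally_spaced : M <> 0 -> forall ys : list R, Sorted Rlt ys ->
  (forall y, In y ys <-> inter_pt M a b s c y) ->
  forall i, (S (S i) < length ys)%nat ->
  nth (S i) ys 0 - nth i ys 0 = nth (S (S i)) ys 0 - nth (S i) ys 0.
Proof.
  intros HM ys Hys Henum i Hi.
  set (f := fun k => nth k c 0 / M).
  assert (Hsucc : forall k, (k < length s)%nat -> f (S k) - f k = (nth 1 c 0 - nth 0 c 0) / M).
  { intros k Hk. unfold f. rewrite <- (segment_values_arithmetic k) by auto. field. auto. }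
  assert (Hincr : forall k, (k < length s)%nat -> f k < f (S k)).
  { intros k Hk. pose proof (jump_sign k Hk HM) as Hsign.
    pose proof (Rsqr_pos_lt M HM) as HM2. unfold Rsqr in HM2.
    assert (Hquot : f (S k) - f k = (nth (S k) c 0 - nth k c 0) * M / (M * M))
      by (unfold f; field; auto).
    pose proof (Rdiv_lt_0_compat _ _ Hsign HM2). lra. }
  assert (Hrange : forall y, In y ys -> exists k, (k <= length s)%nat /\ y = f k).
  { intros y Hy. apply crossing_on_segment; [auto | apply Henum; auto]. }
  assert (Hinterior : forall k, (1 <= k)%nat -> (k < length s)%nat -> In (f k) ys).
  { intros k Hk1 Hk2. apply Henum, interior_segment_crossing; auto. }
  destruct (Sorted_enum_consecutive f _ ys Hys Hincr Hrange Hinterior i ltac:(lia))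
    as (k1 & Hk1 & Hfirst & Hsecond).
  destruct (Sorted_enum_consecutive f _ ys Hys Hincr Hrange Hinterior (S i) Hi)
    as (k2 & Hk2 & Hsecond' & Hthird).
  pose proof (Hsucc k1 Hk1). pose proof (Hsucc k2 Hk2). lra.
Qed.

End LocalMinimizer.

Lemma two_jump_gain_le alpha beta M a b c0 e : 0 < beta ->
  local_min alpha beta (fun x => M * x) a b nil (c0 :: nil) ->
  0 < e -> 2 * e < b - a -> c0 <> M * (a + b) / 2 ->
  beta * (b - a - 2 * e) * (c0 - M * (a + b) / 2) ^ 2 <= 2 * alpha.
Proof.
  intros Hbeta [Hstep Hmin] He1 He2 Hc0.
  set (m := M * (a + b) / 2) in *.
  assert (Hstep' : is_step a b (a + e :: b - e :: nil) (c0 :: m :: c0 :: nil)).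
  { apply is_step_nodes. simpl. repeat split.
    - intros [|[|[|i]]] Hi; unfold node; simpl; lra || lia.
    - intros [|[|i]] Hi; simpl; auto; lia. }
  pose proof (Hmin _ _ Hstep' eq_refl eq_refl) as Hle.
  rewrite !Gfun_step in Hle by auto.
  unfold step_cost, node in Hle. simpl in Hle.
  replace (piece_cost M c0 a b) with
    (piece_cost M c0 a (a + e) + piece_cost M m (a + e) (b - e) + piece_cost M c0 (b - e) b
     + (b - a - 2 * e) * (c0 - m) ^ 2) in Hle by (unfold piece_cost, m; field).
  lra.
Qed.

Lemma Rpower_third_cube K : 0 < K -> Rpower K (1 / 3) ^ 3 = K.
Proof.
  intros HK. rewrite <- Rpower_pow by apply exp_pos.
  rewrite Rpower_mult. replace (1 / 3 * INR 3) with 1 by (simpl; field). apply Rpower_1; auto.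
Qed.

Lemma cube_gt_of_gt_twice_cbrt K L : 0 < K -> L > 2 * Rpower K (1 / 3) -> 8 * K < L ^ 3.
Proof.
  intros HK HL. rewrite <- (Rpower_third_cube K HK).
  set (r := Rpower K (1 / 3)) in *. assert (Hr : 0 < r) by apply exp_pos.
  replace (L ^ 3) with ((L - 2 * r) * (L ^ 2 + 2 * r * L + 4 * r ^ 2) + 8 * r ^ 3) by ring.
  assert (0 < (L - 2 * r) * (L ^ 2 + 2 * r * L + 4 * r ^ 2)) by (apply Rmult_lt_0_compat; nra).
  lra.
Qed.

Lemma sq_dist_line_mid_outside M a b y : a < b -> y <= a \/ b <= y ->
  M ^ 2 * ((b - a) / 2) ^ 2 <= (M * y - M * (a + b) / 2) ^ 2.
Proof.
  intros Hab Hfar.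
  replace ((M * y - M * (a + b) / 2) ^ 2) with (M ^ 2 * (y - (a + b) / 2) ^ 2) by field.
  apply Rmult_le_compat_l; [nra|].
  assert (Hfactor : (y - (a + b) / 2) ^ 2 - ((b - a) / 2) ^ 2 = (y - a) * (y - b)) by field.
  destruct Hfar; nra.
Qed.

Lemma long_interval_has_jump_or_crossing alpha beta M a b s c :
  0 < alpha -> 0 < beta -> M <> 0 ->
  local_min alpha beta (fun x => M * x) a b s c ->
  b - a > 2 * Rpower (alpha / (beta * M ^ 2)) (1 / 3) ->
  (exists x, In x s) \/ (exists y, inter_pt M a b s c y).
Proof.
  intros Halpha Hbeta HM Hmin Hlong.
  destruct s as [|x s]; [| left; exists x; left; auto].
  pose proof Hmin as [Hstep _].
  destruct c as [|c0 [|]]; destruct Hstep as [Hc _]; try discriminate.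
  set (y := c0 / M). assert (Hc0 : c0 = M * y) by (unfold y; field; auto).
  assert (Hcases : (y <= a \/ b <= y) \/ a < y < b)
    by (destruct (Rle_lt_dec y a), (Rle_lt_dec b y); lra).
  destruct Hcases as [Hfar | Hin].
  2:{ right. exists y. split; [exact Hin | split; [intros [] | exact Hc0]]. }
  exfalso.
  set (K := alpha / (beta * M ^ 2)) in *.
  assert (HM2 : 0 < M ^ 2) by (pose proof (Rsqr_pos_lt M HM); unfold Rsqr in *; nra).
  assert (HK : 0 < K) by (apply Rdiv_lt_0_compat; nra).
  pose proof (cube_gt_of_gt_twice_cbrt K (b - a) HK Hlong) as Hcube.
  set (L := b - a) in *.
  assert (HL : 0 < L) by nra.
  (* so that [(L - 2 e) L^2 = (L^3 + 8 K) / 2 > 8 K] *)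
  set (e := (L ^ 3 - 8 * K) / (4 * L ^ 2)).
  assert (HeL : e * (4 * L ^ 2) = L ^ 3 - 8 * K) by (unfold e; field; nra).
  assert (He : 0 < e /\ 2 * e < L) by (split; nra).
  pose proof (sq_dist_line_mid_outside M a b y ltac:(unfold L in HL; lra) Hfar) as Hsq.
  rewrite <- Hc0 in Hsq. fold L in Hsq.
  assert (Hoff : c0 <> M * (a + b) / 2).
  { intros E. rewrite E, Rminus_diag in Hsq.
    assert (0 < M ^ 2 * (L / 2) ^ 2) by (apply Rmult_lt_0_compat; [lra | apply pow_lt; lra]).
    lra. }
  pose proof (two_jump_gain_le alpha beta M a b c0 e Hbeta Hmin (proj1 He) (proj2 He) Hoff)
    as Hbound.
  fold L in Hbound.
  assert (Hshrunk : beta * (L - 2 * e) * (M ^ 2 * (L / 2) ^ 2) <= 2 * alpha).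
  { eapply Rle_trans; [|exact Hbound]. apply Rmult_le_compat_l; [nra | exact Hsq]. }
  assert (Halpha_K : alpha = beta * M ^ 2 * K) by (unfold K; field; split; lra).
  assert (Hkey : (L - 2 * e) * L ^ 2 <= 8 * K) by (apply (Rmult_le_reg_l (beta * M ^ 2)); nra).
  nra.
Qed.

Theorem lemma4p5 (alpha beta M a b : R) (s c : list R) :
  0 < alpha -> 0 < beta -> a < b ->
  local_min alpha beta (fun x => M * x) a b s c ->
  (* (1) *)
  (M <> 0 -> b - a > 2 * Rpower (alpha / (beta * M ^ 2)) (1 / 3) ->
     (exists x, In x s) \/ (exists y, inter_pt M a b s c y)) /\
  (* (2) *)
  (forall x, In x s ->
     sval_r s c x - M * x = M * x - sval_l s c x /\
     (0 < M -> 0 < sval_r s c x - M * x) /\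
     (M < 0 -> sval_r s c x - M * x < 0)) /\
  (* (3) *)
  (forall x1 x2, In x1 s -> In x2 s -> x1 < x2 ->
     (forall z, In z s -> ~ (x1 < z < x2)) ->
     forall x, x1 < x < x2 -> sval s c x = M * (x1 + x2) / 2) /\
  (* (4) *)
  (M <> 0 -> forall ys : list R, Sorted Rlt ys ->
     (forall y, In y ys <-> inter_pt M a b s c y) ->
     forall i, (S (S i) < length ys)%nat ->
       nth (S i) ys 0 - nth i ys 0 = nth (S (S i)) ys 0 - nth (S i) ys 0).
Proof.
  intros Halpha Hbeta _ Hmin.
  split; [|split; [|split]].
  - intros HM. exact (long_interval_has_jump_or_crossing alpha beta M a b s c Halpha Hbeta HM Hmin).
  - exact (jump_symmetric alpha beta M a b s c Hbeta Hmin).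
  - exact (value_between_consecutive_jumps alpha beta M a b s c Hbeta Hmin).
  - exact (crossings_equally_spaced alpha beta M a b s c Hbeta Hmin).
Qed.
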